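(* Let $W_{(\alpha,\beta)}=(T_1,T_2)$ be a commuting 2-variable weighted shift. Then (i) $T_1^*T_1$ commutes with $T_2^*T_1$ if and only if $\alpha_{\mathbf{k}+\varepsilon_1}=\alpha_{\mathbf{k}+\varepsilon_2}$ for all $\mathbf{k}\in\mathbb{Z}_+^2$; (ii) $T_2^*T_2$ commutes with $T_1^*T_2$ if and only if $\beta_{\mathbf{k}+\varepsilon_1}=\beta_{\mathbf{k}+\varepsilon_2}$ for all $\mathbf{k}\in\mathbb{Z}_+^2$; (iii) $T_1^*T_1$ always commutes with $T_2^*T_2$.
   Context: A 2-variable weighted shift $W_{(\alpha,\beta)}=(T_1,T_2)$ on $\ell^2(\mathbb{Z}_+^2)$ (orthonormal basis $\{e_{\mathbf{k}}\}$) is given by bounded positive weights via $T_1e_{\mathbf{k}}=\alpha_{\mathbf{k}}e_{\mathbf{k}+\varepsilon_1}$, $T_2e_{\mathbf{k}}=\beta_{\mathbf{k}}e_{\mathbf{k}+\varepsilon_2}$, $\varepsilon_1=(1,0)$, $\varepsilon_2=(0,1)$; it is commuting iff $\beta_{\mathbf{k}+\varepsilon_1}\alpha_{\mathbf{k}}=\alpha_{\mathbf{k}+\varepsilon_2}\beta_{\mathbf{k}}$ for all $\mathbf{k}$. *)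

(* Vectors of l^2(Z_+^2) are represented by their coordinate
   functions f : nat -> nat -> R, f i j = <x, e_(i,j)>.  Real scalars suffice:
   all weights are real, so all operators involved have real matrices. *)
From Stdlib Require Import Reals List.
Open Scope R_scope.

Definition vec := nat -> nat -> R.

Definition sum_sq_box (f : vec) (N : nat) : R :=
  fold_right Rplus 0
    (map (fun i => fold_right Rplus 0 (map (fun j => f i j * f i j) (seq 0 N)))
         (seq 0 N)).
Definition l2 (f : vec) : Prop := exists M : R, forall N, sum_sq_box f N <= M.

Definition weights := nat -> nat -> R.

(* T1 e_(i,j) = alpha_(i,j) e_(i+1,j);  T2 e_(i,j) = beta_(i,j) e_(i,j+1) *)
Definition T1 (a : weights) (f : vec) : vec :=
  fun i j => match i with O => 0 | S i' => a i' j * f i' j end.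
Definition T2 (b : weights) (f : vec) : vec :=
  fun i j => match j with O => 0 | S j' => b i j' * f i j' end.
(* Hilbert-space adjoints: T1^* e_(i,j) = alpha_(i-1,j) e_(i-1,j) (0 if i = 0),
   i.e. (T1^* f)(i,j) = alpha_(i,j) f(i+1,j). *)
Definition T1adj (a : weights) (f : vec) : vec := fun i j => a i j * f (S i) j.
Definition T2adj (b : weights) (f : vec) : vec := fun i j => b i j * f i (S j).

Definition bounded_pos_weights (w : weights) : Prop :=
  (forall i j, 0 < w i j) /\ (exists M, forall i j, w i j <= M).

Definition commuting_shift (a b : weights) : Prop :=
  forall i j, b (S i) j * a i j = a i (S j) * b i j.

Definition op_commute (A B : vec -> vec) : Prop :=
  forall f, l2 f -> A (B f) = B (A f).

(* Both T1^*T1 and T2^*T2 are diagonal, with entries alpha_k^2 and beta_k^2,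
   while T2^*T1 and T1^*T2 move the coordinate e_k to a multiple of
   e_(k+e1-e2) resp. e_(k+e2-e1) with a nonzero coefficient.  A diagonal
   operator D = diag(d_k) commutes with such an operator iff d is constant
   along the antidiagonals, d_(k+e1) = d_(k+e2), as testing on the unit
   vectors e_k shows; for d = alpha^2 or beta^2 this is the condition on the
   weights because they are positive.  Two diagonal operators commute. *)
From Stdlib Require Import Reals List Lra Lia FunctionalExtensionality.
Open Scope R_scope.

Definition diag (d : weights) (f : vec) : vec := fun i j => d i j * f i j.

Definition unit_vec (p q : nat) : vec :=
  fun i j => if andb (i =? p)%nat (j =? q)%nat then 1 else 0.

Definition antidiagonal_constant (w : weights) : Prop :=
  forall i j, w (S i) j = w i (S j).

Lemma sum_seq_le_point_bound (g : nat -> R) (p : nat) (c : R) :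
  0 <= c -> (forall k, g k <= if (k =? p)%nat then c else 0) ->
  forall N, fold_right Rplus 0 (map g (seq 0 N)) <= c.
Proof.
  intros c_ge0 g_le N.
  enough (H : forall s, fold_right Rplus 0 (map g (seq s N))
                        <= if (s <=? p)%nat then c else 0) by exact (H 0%nat).
  induction N as [|N IH]; intros s; simpl.
  - destruct (s <=? p)%nat; lra.
  - specialize (IH (S s)); specialize (g_le s).
    destruct (Nat.eqb_spec s p) as [s_eq_p | s_ne_p]; [subst s|].
    + rewrite Nat.leb_refl.
      replace (S p <=? p)%nat with false in IH by (symmetry; apply Nat.leb_gt; lia).
      lra.
    + destruct (Nat.leb_spec s p), (Nat.leb_spec (S s) p); lra || lia.
Qed.

Lemma unit_vec_l2 (p q : nat) : l2 (unit_vec p q).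
Proof.
  exists 1; intros N; unfold sum_sq_box.
  apply (sum_seq_le_point_bound _ p); [lra|]; intros i.
  destruct (i =? p)%nat eqn:E;
    [apply (sum_seq_le_point_bound _ q 1) | apply (sum_seq_le_point_bound _ q 0)];
    try lra; intros j; unfold unit_vec; rewrite E; destruct (j =? q)%nat; simpl; lra.
Qed.

Lemma diag_commute (d e : weights) : op_commute (diag d) (diag e).
Proof.
  intros f _; extensionality i; extensionality j; unfold diag; ring.
Qed.

Lemma T1adj_T1 (a : weights) :
  (fun f => T1adj a (T1 a f)) = diag (fun i j => Rsqr (a i j)).
Proof.
  extensionality f; extensionality i; extensionality j.
  unfold T1adj, T1, diag, Rsqr; simpl; ring.
Qed.

Lemma T2adj_T2 (b : weights) :
  (fun f => T2adj b (T2 b f)) = diag (fun i j => Rsqr (b i j)).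
Proof.
  extensionality f; extensionality i; extensionality j.
  unfold T2adj, T2, diag, Rsqr; simpl; ring.
Qed.

Lemma antidiagonal_constant_Rsqr (w : weights) :
  (forall i j, 0 < w i j) ->
  antidiagonal_constant (fun i j => Rsqr (w i j)) <-> antidiagonal_constant w.
Proof.
  intros w_pos; split; intros H i j.
  - apply Rsqr_inj; [apply Rlt_le, w_pos .. | apply H].
  - now rewrite H.
Qed.

Section DiagonalCommutant.

Variables a b : weights.
Hypothesis a_pos : forall i j, 0 < a i j.
Hypothesis b_pos : forall i j, 0 < b i j.

Lemma diag_commute_T2adj_T1 (d : weights) :
  op_commute (diag d) (fun f => T2adj b (T1 a f)) <-> antidiagonal_constant d.
Proof.
  split.
  - intros H i j.
    specialize (H (unit_vec i (S j)) (unit_vec_l2 _ _)).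
    apply (f_equal (fun g => g (S i) j)) in H.
    unfold diag, T2adj, T1, unit_vec in H; simpl in H.
    rewrite !Nat.eqb_refl in H; simpl in H.
    assert (0 < b (S i) j * a i (S j)) by (apply Rmult_lt_0_compat; auto).
    apply (Rmult_eq_reg_l (b (S i) j * a i (S j))); lra.
  - intros H f _; extensionality i; extensionality j.
    unfold diag, T2adj, T1; destruct i as [|i]; [ring|].
    rewrite H; ring.
Qed.

Lemma diag_commute_T1adj_T2 (d : weights) :
  op_commute (diag d) (fun f => T1adj a (T2 b f)) <-> antidiagonal_constant d.
Proof.
  split.
  - intros H i j.
    specialize (H (unit_vec (S i) j) (unit_vec_l2 _ _)).
    apply (f_equal (fun g => g i (S j))) in H.
    unfold diag, T1adj, T2, unit_vec in H; simpl in H.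
    rewrite !Nat.eqb_refl in H; simpl in H.
    assert (0 < a i (S j) * b (S i) j) by (apply Rmult_lt_0_compat; auto).
    apply (Rmult_eq_reg_l (a i (S j) * b (S i) j)); lra.
  - intros H f _; extensionality i; extensionality j.
    unfold diag, T1adj, T2; destruct j as [|j]; [ring|].
    rewrite H; ring.
Qed.

End DiagonalCommutant.

Theorem lemma3p6 (a b : weights) :
  bounded_pos_weights a -> bounded_pos_weights b -> commuting_shift a b ->
  (op_commute (fun f => T1adj a (T1 a f)) (fun f => T2adj b (T1 a f))
     <-> forall i j, a (S i) j = a i (S j)) /\
  (op_commute (fun f => T2adj b (T2 b f)) (fun f => T1adj a (T2 b f))
     <-> forall i j, b (S i) j = b i (S j)) /\
  op_commute (fun f => T1adj a (T1 a f)) (fun f => T2adj b (T2 b f)).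
Proof.
  intros [a_pos _] [b_pos _] _.
  rewrite T1adj_T1, T2adj_T2.
  split; [|split].
  - rewrite (diag_commute_T2adj_T1 a b a_pos b_pos).
    exact (antidiagonal_constant_Rsqr a a_pos).
  - rewrite (diag_commute_T1adj_T2 a b a_pos b_pos).
    exact (antidiagonal_constant_Rsqr b b_pos).
  - apply diag_commute.
Qed.
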